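(* Let $S$ be a profinite semigroup such that, for each integer $n\geq 1$, $S$ admits only finitely many open congruences of index $n$. Then $S$ has a fundamental system of open fully invariant congruences. In particular, this holds if $S$ is finitely generated (as a profinite semigroup).
   Context: A congruence $\rho$ on a profinite semigroup $S$ is open if it is an open subset of $S\times S$ (equivalently, it is the kernel of a continuous surjection from $S$ onto a finite semigroup). The index of an open congruence $\rho$ is the cardinality of $S/\rho$. A congruence $\rho$ is fully invariant if for every continuous endomorphism $f\colon S\to S$, $(x,y)\in\rho$ implies $(f(x),f(y))\in\rho$. The unique uniformity on the compact Hausdorff space $S$ has the open congruences as a fundamental system of entourages; a ''fundamental system of open fully invariant congruences'' means a family of open fully invariant congruences such that every open congruence on $S$ contains one of them. $S$ is finitely generated if some finite subset generates a dense subsemigroup. *)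

From HB Require Import structures.
From mathcomp Require Import all_boot all_order.
From mathcomp Require Import all_classical all_reals all_analysis.

Set Implicit Arguments.
Unset Strict Implicit.
Unset Printing Implicit Defensive.

Local Open Scope classical_set_scope.

Definition topological_semigroup (T : topologicalType) (op : T -> T -> T) :=
  (forall x y z, op x (op y z) = op (op x y) z) /\
  continuous (fun p : T * T => op p.1 p.2).

Definition profinite_semigroup (T : topologicalType) (op : T -> T -> T) :=
  [/\ topological_semigroup op, compact [set: T], hausdorff_space T
    & totally_disconnected [set: T]].

Definition congruence (T : Type) (op : T -> T -> T) (r : T -> T -> Prop) :=
  [/\ (forall x, r x x), (forall x y, r x y -> r y x),
      (forall x y z, r x y -> r y z -> r x z)
    & (forall x y u v, r x y -> r u v -> r (op x u) (op y v))].

Definition open_congruence (T : topologicalType) (op : T -> T -> T)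
    (r : T -> T -> Prop) :=
  congruence op r /\ open [set p : T * T | r p.1 p.2].

(* The quotient T / r has exactly n elements. *)
Definition has_index (T : Type) (r : T -> T -> Prop) (n : nat) :=
  exists f : T -> 'I_n, (forall i, exists x, f x = i) /\
                        (forall x y, r x y <-> f x = f y).

Definition continuous_endomorphism (T : topologicalType) (op : T -> T -> T)
    (f : T -> T) :=
  continuous f /\ (forall x y, f (op x y) = op (f x) (f y)).

Definition fully_invariant (T : topologicalType) (op : T -> T -> T)
    (r : T -> T -> Prop) :=
  forall f : T -> T, continuous_endomorphism op f ->
    forall x y, r x y -> r (f x) (f y).

Definition has_fundamental_system_of_open_fully_invariant_congruences
    (T : topologicalType) (op : T -> T -> T) :=
  forall r, open_congruence op r ->
    exists s, [/\ open_congruence op s, fully_invariant op s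
                & forall x y, s x y -> r x y].

Definition generated_subsemigroup (T : Type) (op : T -> T -> T) (A : set T) :
    set T :=
  \bigcap_(B in [set B : set T | A `<=` B /\
                   (forall x y, B x -> B y -> B (op x y))]) B.

Definition finitely_generated (T : topologicalType) (op : T -> T -> T) :=
  exists A : set T, finite_set A /\ dense (generated_subsemigroup op A).

(** Fix an open congruence [r], of index [n] by compactness. Pulling an open
    congruence back along a continuous endomorphism gives an open congruence of
    no larger index, so the family of open congruences of index at most [n] is
    closed under such pullbacks; it is finite by hypothesis and contains [r].
    Its intersection is therefore an open, fully invariant congruence contained
    in [r].  When [S] is topologically generated by a finite set [A], a
    continuous homomorphism onto a semigroup with [n] elements is determined by
    its multiplication table and the images of [A], which leaves only finitely
    many open congruences of index [n]. *)

From mathcomp Require Import all_boot all_order.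
From mathcomp Require Import all_classical all_reals all_analysis.

Set Implicit Arguments.
Unset Strict Implicit.
Unset Printing Implicit Defensive.

Local Open Scope classical_set_scope.

Lemma open_bigcap_finite (X : topologicalType) (I : choiceType) (D : set I)
    (F : I -> set X) :
  finite_set D -> (forall i, D i -> open (F i)) -> open (\bigcap_(i in D) F i).
Proof.
move=> Dfin Fo; rewrite -bigsetI_fset_set // big_seq.
apply: (big_ind open); [exact: openT | exact: openI |].
by move=> i; rewrite in_fset_set // inE; exact: Fo.
Qed.

Lemma compact_finite_subcover_seq (X : topologicalType) (I : eqType)
    (U : I -> set X) (K : set X) :
  compact K -> (forall i, open (U i)) -> K `<=` \bigcup_i U i ->
  exists s : seq I, forall x, K x -> exists2 i, i \in s & U i x.
Proof.
move=> /compact_near_coveringP Kcov Uo KU.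
pose F := filter_from [set: seq I]
  (fun s0 : seq I => [set s : seq I | {subset s0 <= s}]).
have FF : Filter F.
  apply: filter_from_filter; first by exists [::].
  move=> s1 s2 _ _; exists (s1 ++ s2) => // s /= s12.
  by split=> i ism; apply: s12; rewrite mem_cat ism ?orbT.
have [s0 _ s0cov] : F [set s | K `<=` (fun x => exists2 i, i \in s & U i x)].
  apply: (Kcov _ F (fun s x => exists2 i, i \in s & U i x) FF) => x /KU[i _ Uix].
  exists (U i, [set s | {subset [:: i] <= s}]).
    by split; [apply: open_nbhs_nbhs; split=> //; exact: Uo | exists [:: i]].
  by case=> y s [/= Uiy si]; exists i => //; apply: si; exact: mem_head.
by exists s0; apply: s0cov.
Qed.

Lemma dense_eq_open_fibers (X : topologicalType) (U : Type) (f g : X -> U)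
    (D : set X) :
  dense D -> (forall x, open [set y | f y = f x]) ->
  (forall x, open [set y | g y = g x]) -> {in D, f =1 g} -> f =1 g.
Proof.
move=> Dd fo go fgD x.
have [|y [[/= <- <-] Dy]] := Dd _ _ (openI (fo x) (go x)); first by exists x.
exact/fgD/mem_set.
Qed.

Lemma has_index_kernel (T : Type) k (g : T -> 'I_k) (r : T -> T -> Prop) :
  (forall x y, r x y <-> g x = g y) -> exists2 m, (m <= k)%N & has_index r m.
Proof.
move=> rg; pose B := [set i | `[< exists x, g x = i >]].
have gB x : g x \in B by rewrite inE; apply/asboolP; exists x.
exists #|B|; first by rewrite -[leqRHS]card_ord max_card.
exists (fun x => enum_rank_in (gB x) (g x)); split.
- move=> i; have := enum_valP i; rewrite inE => /asboolP[x gx]; exists x.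
  by apply: enum_val_inj; rewrite enum_rankK_in // gx.
- move=> x y; rewrite rg; split=> E.
    by apply: enum_val_inj; rewrite !enum_rankK_in.
  by move/(congr1 enum_val): E; rewrite !enum_rankK_in.
Qed.

Lemma has_index_comp (T U : Type) (t : T -> T -> Prop) (f : U -> T) k :
  has_index t k ->
  exists2 m, (m <= k)%N & has_index (fun a b => t (f a) (f b)) m.
Proof.
by case=> g [_ tg]; apply: (has_index_kernel (g := g \o f)) => a b; exact: tg.
Qed.

Lemma has_index_gt0 (T : Type) (r : T -> T -> Prop) n (x : T) :
  has_index r n -> (0 < n)%N.
Proof. by case=> g _; case: n g => [|//] g; case: (g x). Qed.

Lemma kernel_find_representative (T : eqType) (r : T -> T -> Prop) (l : seq T) :
  (forall x y, r x y -> r y x) -> (forall x y z, r x y -> r y z -> r x z) ->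
  (forall y, exists2 z, z \in l & r z y) ->
  forall x y,
    r x y <-> find (fun z => `[< r z x >]) l = find (fun z => `[< r z y >]) l.
Proof.
move=> rs rt lcov x y; split=> [rxy|].
  by apply: eq_find => z; apply/asboolP/asboolP => /rt; apply; last exact: rs.
have hasr w : has (fun z => `[< r z w >]) l.
  by have [z zl rzw] := lcov w; apply/hasP; exists z => //; apply/asboolP.
move=> E; have := nth_find x (hasr x); have := nth_find x (hasr y).
by rewrite -E => /asboolP ry /asboolP rx; exact: rt (rs _ _ rx) ry.
Qed.

Lemma eq_on_generated_subsemigroup (T U : Type) (op : T -> T -> T)
    (opU : U -> U -> U) (f g : T -> U) (A : set T) :
  (forall x y, f (op x y) = opU (f x) (f y)) ->
  (forall x y, g (op x y) = opU (g x) (g y)) ->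
  {in A, f =1 g} -> {in generated_subsemigroup op A, f =1 g}.
Proof.
move=> fM gM fgA x /set_mem /(_ [set y | f y = g y]).
apply; split=> [a Aa|a b /= fga fgb]; first exact/fgA/mem_set.
by rewrite fM gM fga fgb.
Qed.

Section OpenCongruences.
Variables (T : topologicalType) (op : T -> T -> T).

Lemma congruence_bigcap (F : set (T -> T -> Prop)) :
  (forall t, F t -> congruence op t) ->
  congruence op (fun x y => forall t, F t -> t x y).
Proof.
move=> Fc; split.
- by move=> x t /Fc[].
- by move=> x y h t Ft; have [_ ts _ _] := Fc t Ft; exact: ts (h t Ft).
- move=> x y z h1 h2 t Ft; have [_ _ tt _] := Fc t Ft.
  exact: tt (h1 t Ft) (h2 t Ft).
- move=> x y u v h1 h2 t Ft; have [_ _ _ tc] := Fc t Ft.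
  exact: tc (h1 t Ft) (h2 t Ft).
Qed.

Lemma open_congruence_bigcap (F : set (T -> T -> Prop)) :
  finite_set F -> (forall t, F t -> open_congruence op t) ->
  open_congruence op (fun x y => forall t, F t -> t x y).
Proof.
move=> Ffin Fo; split; first by apply: congruence_bigcap => t /Fo[].
have -> : [set p : T * T | forall t, F t -> t p.1 p.2] =
    \bigcap_(t in F) [set p | t p.1 p.2] by [].
by apply: open_bigcap_finite => // t /Fo[].
Qed.

Lemma open_congruence_class r x :
  open_congruence op r -> open [set y | r x y].
Proof.
move=> [_ ro].
rewrite -[X in open X]/((fun y => (x, y)) @^-1` [set p : T * T | r p.1 p.2]).
move: ro; apply: (proj1 (continuousP _)) => y.
by apply: cvg_pair; [exact: cvg_cst | exact: cvg_id].
Qed.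

Lemma open_congruence_comp t f :
  open_congruence op t -> continuous_endomorphism op f ->
  open_congruence op (fun a b => t (f a) (f b)).
Proof.
move=> [[tr ts tt tc] topen] [fc fM]; split.
  split=> [x|x y|x y z|x y u v h1 h2]; [exact: tr|exact: ts|exact: tt|].
  by rewrite !fM; exact: tc.
rewrite -[X in open X]/((fun p : T * T => (f p.1, f p.2)) @^-1`
                         [set p : T * T | t p.1 p.2]).
move: topen; apply: (proj1 (continuousP _)) => p; apply: cvg_pair.
  exact: continuous_comp (@cvg_fst _ _ _ _ _) (fc _).
exact: continuous_comp (@cvg_snd _ _ _ _ _) (fc _).
Qed.

Lemma compact_open_congruence_has_index r :
  compact [set: T] -> open_congruence op r -> exists n, has_index r n.
Proof.
move=> cpt ro; have [[rr rs rt _] _] := ro.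
have [D Dreps] := @compact_finite_subcover_seq _ _ (fun x => [set y | r x y]) _
  cpt (fun x => open_congruence_class x ro) (fun y _ => ex_intro2 _ _ y I (rr y)).
(* number the class of [y] by the position of its first representative in [D] *)
pose g y : 'I_(size D).+1 :=
  @Ordinal (size D).+1 (find (fun z => `[< r z y >]) D) (find_size _ _).
have rg x y : r x y <-> g x = g y.
  rewrite (kernel_find_representative rs rt (fun y => Dreps y I)).
  by split=> [E|/(congr1 val)//]; apply: val_inj.
by have [m _ rm] := has_index_kernel rg; exists m.
Qed.

Lemma finitely_generated_finite_index_congruences n :
  finitely_generated op ->
  finite_set [set r : T -> T -> Prop | open_congruence op r /\ has_index r n].
Proof.
move=> [A [Afin Adense]]; have [l Al] := (finite_seqP A).1 Afin.
pose gens := in_tuple l.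
(* a multiplication table on ['I_n] and the images of the generators *)
pose D := ({ffun 'I_n * 'I_n -> 'I_n} * {ffun 'I_(size l) -> 'I_n})%type.
pose presents (d : D) (phi : T -> 'I_n) :=
  [/\ forall x y, phi (op x y) = d.1 (phi x, phi y),
      forall i, phi (tnth gens i) = d.2 i
    & forall x, open [set y | phi y = phi x]].
have presents_uniq d phi psi : presents d phi -> presents d psi -> phi =1 psi.
  move=> [phiM phiA phio] [psiM psiA psio].
  apply: (dense_eq_open_fibers Adense phio psio).
  apply: (eq_on_generated_subsemigroup (opU := fun u v => d.1 (u, v)) phiM psiM).
  by move=> a; rewrite inE Al => /(tnthP gens)[i ->]; rewrite phiA psiA.
pose rel_of (d : D) x y := forall phi, presents d phi -> phi x = phi y.
apply: (sub_finite_set _ (finite_image rel_of (@finite_finset _ [set: D]))).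
move=> r [ro [phi [phi_onto rphi]]]; have [[_ _ _ rc] _] := ro.
have [rep repK] : {rep : 'I_n -> T | cancel rep phi}.
  by exists (fun i => projT1 (cid (phi_onto i))) => i; case: cid.
pose d : D := ([ffun p => phi (op (rep p.1) (rep p.2))],
               [ffun i => phi (tnth gens i)]).
have phid : presents d phi.
  split=> [x y|i|x]; rewrite ?ffunE //=.
    by apply/rphi/rc; apply/rphi; rewrite repK.
  have -> : [set y | phi y = phi x] = [set y | r x y].
    by apply/seteqP; split=> y /=; rewrite rphi => ->.
  exact: open_congruence_class ro.
exists d => //; apply/funext => x; apply/funext => y; apply/propext.
split=> [dxy|/rphi rxy psi psid]; first exact/rphi/dxy.
by rewrite !(presents_uniq d psi phi psid phid).
Qed.

End OpenCongruences.

Section FullyInvariantCongruences.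
Variables (T : topologicalType) (op : T -> T -> T).
Hypothesis T_compact : compact [set: T].
Hypothesis finite_index_congruences : forall n, (0 < n)%N ->
  finite_set [set r : T -> T -> Prop | open_congruence op r /\ has_index r n].

Let small_congruences n := \bigcup_(k in [set k | (0 < k <= n)%N])
  [set t : T -> T -> Prop | open_congruence op t /\ has_index t k].

Let finite_small_congruences n : finite_set (small_congruences n).
Proof.
apply: bigcup_finite => [|k /andP[k_gt0 _]]; last first.
  exact: finite_index_congruences k_gt0.
by apply: sub_finite_set (finite_II n.+1) => k /andP[_]; rewrite /= ltnS.
Qed.

(* The point [x] only witnesses that indices are positive. *)
Let small_congruences_comp n t f (x : T) : continuous_endomorphism op f ->
  small_congruences n t -> small_congruences n (fun a b => t (f a) (f b)).
Proof.
move=> fe [k /andP[_ kn] [to tk]]; have [m mk tfm] := has_index_comp f tk.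
exists m; last by split; [exact: open_congruence_comp | exact: tfm].
by rewrite /= (has_index_gt0 x tfm) (leq_trans mk kn).
Qed.

Lemma fundamental_system_of_fully_invariant_congruences :
  has_fundamental_system_of_open_fully_invariant_congruences op.
Proof.
move=> r ro; have [n rn] := compact_open_congruence_has_index T_compact ro.
exists (fun x y => forall t, small_congruences n t -> t x y); split.
- apply: open_congruence_bigcap (finite_small_congruences n) _.
  by move=> t [k _ []].
- by move=> f fe x y sxy t tn; exact: sxy _ (small_congruences_comp x fe tn).
- move=> x y; apply; exists n => //.
  by rewrite /= (has_index_gt0 x rn) leqnn.
Qed.

End FullyInvariantCongruences.

Theorem proposition2 (T : topologicalType) (op : T -> T -> T) :
  profinite_semigroup op ->
  ((forall n : nat, (0 < n)%N ->
      finite_set [set r : T -> T -> Prop | open_congruence op r /\ has_index r n]) ->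
    has_fundamental_system_of_open_fully_invariant_congruences op) /\
  (finitely_generated op ->
    has_fundamental_system_of_open_fully_invariant_congruences op).
Proof.
move=> [_ T_compact _ _].
split; first exact: fundamental_system_of_fully_invariant_congruences.
move=> fg; apply: fundamental_system_of_fully_invariant_congruences => // n _.
exact: finitely_generated_finite_index_congruences.
Qed.
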